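(* Let $A\subseteq\mathbb{R}^d$ be a rational affine subspace containing some point $\vec{x}\in\mathbb{N}^d$. Then there exists a constant $c>0$ such that for every $p^*\in\mathbb{N}_+$ and every $\vec{y}\in\{\vec{x}+p^*\vec{z}:\vec{z}\in\mathbb{Z}^d\}$ with $\vec{y}\notin A$, the Euclidean distance satisfies $\mathrm{dist}(\vec{y},A)\ge c\,p^*$.
   Context: A rational affine subspace of $\mathbb{R}^d$ is the solution set of a finite system of linear equations $\vec{a}\cdot\vec{z}=b$ with $\vec{a}\in\mathbb{Q}^d$, $b\in\mathbb{Q}$. *)

From HB Require Import structures.
From mathcomp Require Import all_boot all_order all_algebra.
From mathcomp Require Import boolp classical_sets reals.
Set Implicit Arguments. Unset Strict Implicit. Unset Printing Implicit Defensive.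
Import Order.TTheory GRing.Theory Num.Theory.
Local Open Scope classical_set_scope.
Local Open Scope ring_scope.

Definition rat_affine_set (R : realType) (d m : nat)
  (a : 'I_m -> 'I_d -> rat) (b : 'I_m -> rat) : set ('I_d -> R) :=
  [set z | forall i : 'I_m, \sum_(j < d) ratr (a i j) * z j = ratr (b i)].

Definition rational_affine (R : realType) (d : nat) (A : set ('I_d -> R)) : Prop :=
  exists m (a : 'I_m -> 'I_d -> rat) (b : 'I_m -> rat), A = @rat_affine_set R d m a b.

Definition eucl_norm (R : realType) (d : nat) (v : 'I_d -> R) : R :=
  Num.sqrt (\sum_(j < d) v j ^+ 2).

Definition dist_set (R : realType) (d : nat) (y : 'I_d -> R) (A : set ('I_d -> R)) : R :=
  inf [set eucl_norm (fun j => y j - w j) | w in A].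

From HB Require Import structures.
From mathcomp Require Import all_boot all_order all_algebra.
From mathcomp Require Import boolp classical_sets reals ring.
Import Order.TTheory GRing.Theory Num.Theory.
Local Open Scope classical_set_scope.
Local Open Scope ring_scope.

(* Write A as the solution set of rational equations a_i . w = b_i and let D
   be a common denominator of all the a_ij.  If y = x + p z with x in A and
   z integral lies outside A, some a_i . z is a nonzero element of (1/D)Z,
   so for every w in A
     p / D <= p |a_i . z| = |a_i . (y - w)| <= (sum_j |a_ij|) |y - w|. *)

Lemma eucl_norm_ge0 (R : realType) d (v : 'I_d -> R) : 0 <= eucl_norm v.
Proof. exact: sqrtr_ge0. Qed.

Lemma normr_le_eucl_norm (R : realType) d (v : 'I_d -> R) j :
  `|v j| <= eucl_norm v.
Proof.
rewrite /eucl_norm -sqrtr_sqr; apply: ler_wsqrtr.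
by rewrite (bigD1 j) //= lerDl sumr_ge0 // => k _; apply: sqr_ge0.
Qed.

Lemma ler_norm_dot_eucl (R : realType) d (a v : 'I_d -> R) :
  `|\sum_j a j * v j| <= (\sum_j `|a j|) * eucl_norm v.
Proof.
apply: le_trans (ler_norm_sum _ _ _) _; rewrite mulr_suml.
by apply: ler_sum => j _; rewrite normrM ler_wpM2l ?normr_le_eucl_norm.
Qed.

Lemma le_dist_set (R : realType) d (y : 'I_d -> R) (A : set ('I_d -> R)) e :
  A !=set0 -> (forall w, A w -> e <= eucl_norm (fun j => y j - w j)) ->
  e <= dist_set y A.
Proof.
move=> [w Aw] le_e; apply: lb_le_inf => [|_ [u Au <-]]; last exact: le_e.
by exists (eucl_norm (fun j => y j - w j)), w.
Qed.

Lemma common_denominator {I : finType} (f : I -> rat) :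
  exists2 D : int, 0 < D & forall i, D%:~R * f i \is a Num.int.
Proof.
exists (\prod_i denq (f i)); first by apply: prodr_gt0 => i _; apply: denq_gt0.
move=> i; rewrite (bigD1 i) //= rmorphM /= mulrAC [_ * f i]mulrC -numqE.
by rewrite rpredM ?rpred_int.
Qed.

Lemma int_scaled_norm_ge1 (F : archiNumDomainType) (D s : F) :
  0 < D -> D * s \is a Num.int -> s != 0 -> 1 <= D * `|s|.
Proof.
move=> D_gt0 Ds_int s_neq0; rewrite -(gtr0_norm D_gt0) -normrM.
by apply: norm_intr_ge1 => //; rewrite mulf_neq0 // gt_eqF.
Qed.

Section LatticeDistance.
Variables (R : realType) (d m : nat) (a : 'I_m -> 'I_d -> rat) (b : 'I_m -> rat).
Local Notation A := (@rat_affine_set R d m a b).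

Lemma rat_affine_set_shift {x : 'I_d -> R} p (z : 'I_d -> int) i : A x ->
  \sum_j ratr (a i j) * (x j + p * (z j)%:~R)
    = ratr (b i) + p * ratr (\sum_j a i j * (z j)%:~R).
Proof.
move=> /(_ i) <-; rewrite rmorph_sum mulr_sumr -big_split /=.
by apply: eq_bigr => j _; rewrite rmorphM /= ratr_int; ring.
Qed.

Lemma rat_affine_set_shift_out {x : 'I_d -> R} {p} {z : 'I_d -> int} : A x ->
  ~ A (fun j => x j + p * (z j)%:~R) ->
  exists i, \sum_j a i j * (z j)%:~R != 0.
Proof.
move=> Ax /existsNP [i /eqP]; rewrite rat_affine_set_shift // => Ni.
by exists i; apply: contraNneq Ni => ->; rewrite rmorph0 mulr0 addr0.
Qed.

Lemma rat_affine_set_shift_dist {x w : 'I_d -> R} {p} (z : 'I_d -> int) i :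
  A x -> A w -> 0 <= p ->
  p * `|ratr (\sum_j a i j * (z j)%:~R)|
    <= (\sum_j `|ratr (a i j) : R|) * eucl_norm (fun j => x j + p * (z j)%:~R - w j).
Proof.
move=> Ax Aw p_ge0.
have shift_dot : \sum_j ratr (a i j) * (x j + p * (z j)%:~R - w j)
                   = p * ratr (\sum_j a i j * (z j)%:~R).
  under eq_bigr do rewrite mulrBr.
  by rewrite sumrB rat_affine_set_shift // (Aw i) addrC addKr.
rewrite -[p in p * _](ger0_norm p_ge0) -normrM -shift_dot.
exact: ler_norm_dot_eucl.
Qed.

Lemma rat_affine_set_lattice_dist : exists2 c : R, 0 < c &
  forall (x : 'I_d -> R) p (z : 'I_d -> int), A x -> 0 <= p ->
    let y := fun j => x j + p * (z j)%:~R in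
    ~ A y -> c * p <= dist_set y A.
Proof.
have [D D_gt0 Da_int] := common_denominator (fun ij : 'I_m * 'I_d => a ij.1 ij.2).
pose K : R := 1 + \sum_i \sum_j `|ratr (a i j)|.
have K_gt0 : 0 < K by rewrite ltr_pwDl // sumr_ge0 // => i _; apply: sumr_ge0.
have DK_gt0 : 0 < D%:~R * K by rewrite mulr_gt0 ?ltr0z.
exists (D%:~R * K)^-1 => [|x p z Ax p_ge0 y Ny]; first by rewrite invr_gt0.
have [i s_neq0] := rat_affine_set_shift_out Ax Ny.
set s := \sum_j _ in s_neq0.
have Ds_ge1 : 1 <= D%:~R * `|ratr s| :> R.
  rewrite -ratr_norm -(ratr_int R D) -rmorphM /= -(rmorph1 (@ratr R)) ler_rat.
  apply: int_scaled_norm_ge1; rewrite ?ltr0z // /s mulr_sumr rpred_sum // => j _.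
  by rewrite mulrA rpredM ?rpred_int // (Da_int (i, j)).
have Ki_le_K : \sum_j `|ratr (a i j) : R| <= K.
  rewrite /K (bigD1 i) //= (addrC 1) -addrA lerDl addr_ge0 // sumr_ge0 // => k _.
  exact: sumr_ge0.
apply: le_dist_set => [|w Aw]; first by exists x.
have dot_bound := rat_affine_set_shift_dist z i Ax Aw p_ge0.
rewrite /y mulrC ler_pdivrMr //.
apply: (le_trans (y := D%:~R * (p * `|ratr s|))); first by rewrite mulrCA ler_peMr.
rewrite [_ * (_ * K)]mulrC -mulrA ler_pM2l ?ltr0z //.
by apply: le_trans dot_bound _; rewrite ler_wpM2r ?eucl_norm_ge0.
Qed.

End LatticeDistance.

Theorem lemma29 (R : realType) (d : nat) (A : set ('I_d -> R))
  (hA : rational_affine A) (x : 'I_d -> nat)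
  (hx : A (fun j => (x j)%:R)) :
  exists c : R, 0 < c /\
    forall (p : nat) (z : 'I_d -> int), (0 < p)%N ->
      let y := (fun j => (x j)%:R + p%:R * (z j)%:~R) : 'I_d -> R in
      ~ A y -> c * p%:R <= dist_set y A.
Proof.
case: hA => m [a [b ->]] in hx *.
have [c c_gt0 dist_ge] := rat_affine_set_lattice_dist R d m a b.
by exists c; split=> // p z _; apply: dist_ge.
Qed.
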